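(* Let $M$ be a positive integer and let $S\subset\mathbb{R}^4$ be a finite set with $|S|\ge M+1$. For each $\lambda\in S$, let $B_\lambda$ be the smallest closed ball centered at $\lambda$ containing at least $M+1$ points of $S$ (counting $\lambda$ itself), and let $R_\lambda$ be its radius. For $\lambda\in S$ let \[ L_\lambda=\{\lambda'\in S: R_{\lambda'}\ge R_\lambda \text{ and } B_\lambda\cap B_{\lambda'}\neq\emptyset\}. \] Then $|L_\lambda|\ll M$ for every $\lambda\in S$, with an absolute implied constant.
   Context: Balls and distances are Euclidean in $\mathbb{R}^4$. *)

From Stdlib Require Import Reals List.
Import ListNotations.
Open Scope R_scope.

Definition pt4 : Type := (R * R * R * R)%type.

Definition dist4 (p q : pt4) : R :=
  let '(a1, a2, a3, a4) := p in
  let '(b1, b2, b3, b4) := q in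
  sqrt ((a1 - b1)^2 + (a2 - b2)^2 + (a3 - b3)^2 + (a4 - b4)^2).

Definition in_ball (c : pt4) (r : R) (x : pt4) : Prop := dist4 c x <= r.

Definition ball_contains_at_least (S : list pt4) (c : pt4) (r : R) (k : nat) : Prop :=
  exists l : list pt4, NoDup l /\ (k <= length l)%nat /\
    forall x, In x l -> In x S /\ in_ball c r x.

Definition is_min_radius (S : list pt4) (M : nat) (c : pt4) (r : R) : Prop :=
  ball_contains_at_least S c r (M + 1)%nat /\
  forall r', ball_contains_at_least S c r' (M + 1)%nat -> r <= r'.

Definition balls_meet (c : pt4) (r : R) (c' : pt4) (r' : R) : Prop :=
  exists x : pt4, in_ball c r x /\ in_ball c' r' x.

(* Sort the points of [L_lambda] into boundedly many classes according to the
   shell [R, 3R/2), [3R/2, 2R), [2R, oo) (or the open ball of radius [R])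
   containing them and the cube of side 1/8 containing their direction seen
   from [lambda].  In a class, let [mu] be the point farthest from [lambda].
   If [mu] lies in the open ball, the whole class does, and that ball holds at
   most [M] points by minimality of [R].  Otherwise every [nu] in the class is
   at distance less than [R_mu] from [mu], since [|mu - lambda| <= R + R_mu]
   and [R <= R_mu]; again by minimality, at most [M] points qualify. *)
From Stdlib Require Import Reals List Lra Lia Psatz ZArith.
Open Scope R_scope.

Lemma NoDup_length_le_classes {A T : Type}
  (eq_dec : forall a b : T, {a = b} + {a <> b})
  (P : A -> Prop) (f : A -> T) (M : nat) :
  (forall k L, NoDup L -> (forall x, In x L -> P x /\ f x = k) ->
     (length L <= M)%nat) ->
  forall ks L, NoDup L -> (forall x, In x L -> P x /\ In (f x) ks) ->
    (length L <= length ks * M)%nat.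
Proof.
  intros Hclass ks; induction ks as [|k ks IH]; intros L HL HLks.
  - destruct L as [|x L]; [simpl; lia|].
    destruct (HLks x (or_introl eq_refl)) as [_ []].
  - set (in_k := fun x => if eq_dec (f x) k then true else false).
    rewrite <- (filter_length in_k L).
    assert (Hk : (length (filter in_k L) <= M)%nat).
    { apply (Hclass k); [now apply NoDup_filter|].
      intros x Hx; apply filter_In in Hx as [Hx Hin].
      split; [now apply HLks|].
      unfold in_k in Hin; destruct (eq_dec (f x) k); congruence. }
    assert (Hks : (length (filter (fun x => negb (in_k x)) L) <= length ks * M)%nat).
    { apply IH; [now apply NoDup_filter|].
      intros x Hx; apply filter_In in Hx as [Hx Hout].
      destruct (HLks x Hx) as [HP [Hfk|Hfks]]; split; auto.
      unfold in_k in Hout; destruct (eq_dec (f x) k); [discriminate|congruence]. }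
    simpl; lia.
Qed.

Lemma exists_argmax {A : Type} (g : A -> R) (a : A) (l : list A) :
  exists m, In m (a :: l) /\ forall x, In x (a :: l) -> g x <= g m.
Proof.
  revert a; induction l as [|b l IH]; intros a.
  - exists a; split; [now left|]. intros x [<-|[]]; lra.
  - destruct (IH b) as [m [Hm Hmax]].
    destruct (Rle_dec (g a) (g m)).
    + exists m; split; [now right|]. intros x [<-|Hx]; auto.
    + exists a; split; [now left|].
      intros x [<-|Hx]; [lra|]. specialize (Hmax x Hx); lra.
Qed.

Definition vsub (p q : pt4) : pt4 :=
  let '(p1, p2, p3, p4) := p in let '(q1, q2, q3, q4) := q in
  (p1 - q1, p2 - q2, p3 - q3, p4 - q4).

Definition vscale (c : R) (p : pt4) : pt4 :=
  let '(p1, p2, p3, p4) := p in (c * p1, c * p2, c * p3, c * p4).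

Definition dot4 (p q : pt4) : R :=
  let '(p1, p2, p3, p4) := p in let '(q1, q2, q3, q4) := q in
  p1 * q1 + p2 * q2 + p3 * q3 + p4 * q4.

Definition sqnorm4 (p : pt4) : R := dot4 p p.

Definition norm4 (p : pt4) : R := sqrt (sqnorm4 p).

Definition unit4 (p : pt4) : pt4 := vscale (/ norm4 p) p.

Lemma vsub_cancel_r p q r : vsub (vsub p r) (vsub q r) = vsub p q.
Proof.
  destruct p as [[[p1 p2] p3] p4], q as [[[q1 q2] q3] q4], r as [[[r1 r2] r3] r4]; simpl.
  f_equal; [f_equal; [f_equal|]|]; ring.
Qed.

Lemma dist4_norm4 p q : dist4 p q = norm4 (vsub p q).
Proof.
  destruct p as [[[p1 p2] p3] p4], q as [[[q1 q2] q3] q4].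
  unfold dist4, norm4, sqnorm4; simpl; f_equal; ring.
Qed.

Lemma sqnorm4_nonneg p : 0 <= sqnorm4 p.
Proof. destruct p as [[[p1 p2] p3] p4]; simpl; nra. Qed.

Lemma norm4_sqr p : norm4 p * norm4 p = sqnorm4 p.
Proof. apply sqrt_sqrt, sqnorm4_nonneg. Qed.

Lemma dot4_le_norm4 p q : dot4 p q <= norm4 p * norm4 q.
Proof.
  assert (Hnp := sqrt_pos (sqnorm4 p)); assert (Hnq := sqrt_pos (sqnorm4 q)).
  destruct (Rle_dec (dot4 p q) 0) as [|Hpos]; [unfold norm4; nra|].
  assert (Hcs : dot4 p q * dot4 p q <= sqnorm4 p * sqnorm4 q).
  { destruct p as [[[p1 p2] p3] p4], q as [[[q1 q2] q3] q4]; simpl.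
    assert (E : (p1 * p1 + p2 * p2 + p3 * p3 + p4 * p4) * (q1 * q1 + q2 * q2 + q3 * q3 + q4 * q4)
      - (p1 * q1 + p2 * q2 + p3 * q3 + p4 * q4) * (p1 * q1 + p2 * q2 + p3 * q3 + p4 * q4)
      = (p1 * q2 - p2 * q1) ^ 2 + (p1 * q3 - p3 * q1) ^ 2 + (p1 * q4 - p4 * q1) ^ 2
      + (p2 * q3 - p3 * q2) ^ 2 + (p2 * q4 - p4 * q2) ^ 2 + (p3 * q4 - p4 * q3) ^ 2) by ring.
    assert (0 <= (p1 * q2 - p2 * q1) ^ 2 + (p1 * q3 - p3 * q1) ^ 2 + (p1 * q4 - p4 * q1) ^ 2
      + (p2 * q3 - p3 * q2) ^ 2 + (p2 * q4 - p4 * q2) ^ 2 + (p3 * q4 - p4 * q3) ^ 2)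
      by (repeat apply Rplus_le_le_0_compat; apply pow2_ge_0).
    lra. }
  rewrite <- norm4_sqr, <- (norm4_sqr q) in Hcs.
  fold (norm4 p) (norm4 q) in *.
  assert (Hnpq : 0 <= norm4 p * norm4 q) by (apply Rmult_le_pos; assumption).
  nra.
Qed.

Lemma norm4_vsub_triangle p q r : norm4 (vsub p r) <= norm4 (vsub p q) + norm4 (vsub q r).
Proof.
  set (u := vsub p q); set (v := vsub q r).
  assert (E : sqnorm4 (vsub p r) = sqnorm4 u + 2 * dot4 u v + sqnorm4 v).
  { unfold u, v; destruct p as [[[p1 p2] p3] p4], q as [[[q1 q2] q3] q4],
      r as [[[r1 r2] r3] r4]; simpl; ring. }
  assert (Hnu := sqrt_pos (sqnorm4 u)); assert (Hnv := sqrt_pos (sqnorm4 v)).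
  assert (Hcs := dot4_le_norm4 u v).
  assert (Hu := norm4_sqr u); assert (Hv := norm4_sqr v).
  unfold norm4 at 1. rewrite <- (sqrt_pow2 (norm4 u + norm4 v)) by (unfold norm4; lra).
  apply sqrt_le_1_alt. rewrite E. nra.
Qed.

Lemma dist4_sym p q : dist4 p q = dist4 q p.
Proof.
  destruct p as [[[p1 p2] p3] p4], q as [[[q1 q2] q3] q4].
  unfold dist4; f_equal; ring.
Qed.

Lemma dist4_triangle p q r : dist4 p r <= dist4 p q + dist4 q r.
Proof. rewrite !dist4_norm4; apply norm4_vsub_triangle. Qed.

Lemma dist4_le0_eq p q : dist4 p q <= 0 -> q = p.
Proof.
  rewrite dist4_norm4; intros H.
  assert (H0 : sqnorm4 (vsub p q) = 0).
  { apply sqrt_eq_0; [apply sqnorm4_nonneg|]. pose proof (sqrt_pos (sqnorm4 (vsub p q))).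
    unfold norm4 in H; lra. }
  destruct p as [[[p1 p2] p3] p4], q as [[[q1 q2] q3] q4]; simpl in H0.
  assert (H1 := Rle_0_sqr (p1 - q1)); assert (H2 := Rle_0_sqr (p2 - q2));
  assert (H3 := Rle_0_sqr (p3 - q3)); assert (H4 := Rle_0_sqr (p4 - q4)).
  unfold Rsqr in *.
  repeat f_equal; nra.
Qed.

Lemma sqnorm4_vscale c p : sqnorm4 (vscale c p) = c ^ 2 * sqnorm4 p.
Proof. destruct p as [[[p1 p2] p3] p4]; simpl; ring. Qed.

Lemma sqnorm4_unit4_le1 p : sqnorm4 (unit4 p) <= 1.
Proof.
  unfold unit4; rewrite sqnorm4_vscale, <- norm4_sqr.
  destruct (Req_dec (norm4 p) 0) as [E|Hn].
  - rewrite E, Rinv_0; lra.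
  - right; field; exact Hn.
Qed.

Lemma sqnorm4_vsub_units p q : 0 < norm4 p -> 0 < norm4 q ->
  sqnorm4 (vsub p q) =
  (norm4 p - norm4 q) ^ 2 + norm4 p * norm4 q * sqnorm4 (vsub (unit4 p) (unit4 q)).
Proof.
  intros Hp Hq.
  assert (E : forall c d, sqnorm4 (vsub (vscale c p) (vscale d q)) =
             c ^ 2 * sqnorm4 p - 2 * c * d * dot4 p q + d ^ 2 * sqnorm4 q).
  { intros c d; destruct p as [[[p1 p2] p3] p4], q as [[[q1 q2] q3] q4]; simpl; ring. }
  assert (Hpq : vsub p q = vsub (vscale 1 p) (vscale 1 q)).
  { destruct p as [[[p1 p2] p3] p4], q as [[[q1 q2] q3] q4]; simpl.
    rewrite !Rmult_1_l; reflexivity. }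
  unfold unit4; rewrite Hpq, !E, <- (norm4_sqr p), <- (norm4_sqr q).
  field; lra.
Qed.

Lemma coords_le1 u1 u2 u3 u4 : sqnorm4 (u1, u2, u3, u4) <= 1 ->
  -1 <= u1 <= 1 /\ -1 <= u2 <= 1 /\ -1 <= u3 <= 1 /\ -1 <= u4 <= 1.
Proof.
  simpl; intros H.
  assert (H1 := Rle_0_sqr u1); assert (H2 := Rle_0_sqr u2);
  assert (H3 := Rle_0_sqr u3); assert (H4 := Rle_0_sqr u4).
  unfold Rsqr in *. repeat split; nra.
Qed.

Definition shell (R d : R) : nat :=
  if Rlt_dec d R then 0
  else if Rlt_dec d (3 * R / 2) then 1
  else if Rlt_dec d (2 * R) then 2
  else 3.

(* Index of the cube of side [1/8] containing the direction [unit4 v]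
   (which is [0] when [v = 0], since [/ 0 = 0]). *)
Definition sector (v : pt4) : Z * Z * Z * Z :=
  let '(u1, u2, u3, u4) := unit4 v in
  (up (8 * u1), up (8 * u2), up (8 * u3), up (8 * u4)).

Definition cls (lam : pt4) (R : R) (nu : pt4) : nat * (Z * Z * Z * Z) :=
  let v := vsub nu lam in (shell R (norm4 v), sector v).

Lemma shell_lt4 R d : (shell R d < 4)%nat.
Proof. unfold shell; repeat destruct Rlt_dec; lia. Qed.

Lemma shell_eq_cases R a b : shell R b = shell R a -> R <= a -> b <= a ->
  R <= b /\ (a < 3 * R / 2 \/ (3 * R / 2 <= b /\ a < 2 * R) \/ 2 * R <= b).
Proof.
  unfold shell; intros Hs Ha Hb.
  repeat destruct Rlt_dec; try discriminate; try lra;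
    split; try lra; first [left; lra | right; left; lra | right; right; lra].
Qed.

Lemma up_close u v : up (8 * u) = up (8 * v) -> (u - v) * (u - v) < 1 / 64.
Proof.
  intros H. destruct (archimed (8 * u)) as [Hu1 Hu2], (archimed (8 * v)) as [Hv1 Hv2].
  rewrite H in Hu1, Hu2. assert (-1/8 < u - v < 1/8) by lra. nra.
Qed.

Lemma sector_eq_close v w :
  sector v = sector w -> sqnorm4 (vsub (unit4 v) (unit4 w)) < 1 / 16.
Proof.
  unfold sector.
  destruct (unit4 v) as [[[u1 u2] u3] u4], (unit4 w) as [[[w1 w2] w3] w4].
  intros H; injection H as E1 E2 E3 E4.
  apply up_close in E1, E2, E3, E4. simpl; lra.
Qed.

(* With [a = |y|], [b = |x|] one has [|y - x|^2 = (a - b)^2 + a b |u - w|^2]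
   for the unit directions [u], [w]; the shell condition makes the second term
   small compared with [r^2 - (a - b)^2]. *)
Lemma norm4_vsub_lt y x R r :
  0 < R -> R <= norm4 x -> norm4 x <= norm4 y ->
  sqnorm4 (vsub (unit4 y) (unit4 x)) < 1 / 16 ->
  norm4 y < 3 * R / 2 \/ (3 * R / 2 <= norm4 x /\ norm4 y < 2 * R) \/ 2 * R <= norm4 x ->
  R <= r -> norm4 y - R <= r ->
  norm4 (vsub y x) < r.
Proof.
  intros HR Hx Hxy HD Hshell Hr1 Hr2.
  unfold norm4 at 1; rewrite sqnorm4_vsub_units by lra.
  rewrite <- (sqrt_pow2 r) by lra. apply sqrt_lt_1_alt.
  set (a := norm4 y) in *; set (b := norm4 x) in *.
  set (D := sqnorm4 (vsub (unit4 y) (unit4 x))) in *.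
  assert (HD0 : 0 <= D) by apply sqnorm4_nonneg.
  assert (Hab : 0 < a * b) by nra.
  assert (HabD : a * b * D <= a * b / 16) by nra.
  split; [nra|].
  destruct Hshell as [Hs|[Hs|Hs]].
  - assert (a * b <= 9 / 4 * R * R) by nra. nra.
  - assert (a * b <= 4 * R * R) by nra. nra.
  - assert ((a - R) ^ 2 - (a - b) ^ 2 >= a * b / 4) by nra. nra.
Qed.

Lemma same_class_close lam mu nu R r :
  0 < R -> R <= r -> R <= dist4 mu lam -> dist4 mu lam <= R + r ->
  dist4 nu lam <= dist4 mu lam -> cls lam R nu = cls lam R mu ->
  dist4 mu nu < r.
Proof.
  rewrite !dist4_norm4; unfold cls; intros HR Hr Hmu Htri Hnu Hcls.
  injection Hcls as Hshell Hsector.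
  destruct (shell_eq_cases R _ _ Hshell Hmu Hnu) as [HRnu Hcase].
  rewrite <- (vsub_cancel_r mu nu lam).
  apply norm4_vsub_lt with R; try assumption; [|lra].
  apply sector_eq_close; symmetry; exact Hsector.
Qed.

Definition cells : list Z := map (fun n => Z.of_nat n - 7)%Z (seq 0 17).

Definition classes : list (nat * (Z * Z * Z * Z)) :=
  list_prod (seq 0 4) (list_prod (list_prod (list_prod cells cells) cells) cells).

Lemma up_in_cells u : -1 <= u <= 1 -> In (up (8 * u)) cells.
Proof.
  intros Hu. destruct (archimed (8 * u)) as [H1 H2].
  assert (Hlo : (-8 < up (8 * u))%Z) by (apply lt_IZR; simpl; lra).
  assert (Hhi : (up (8 * u) <= 9)%Z) by (apply le_IZR; simpl; lra).
  apply in_map_iff; exists (Z.to_nat (up (8 * u) + 7)); split; [lia|].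
  apply in_seq; lia.
Qed.

Lemma cls_in_classes lam R nu : In (cls lam R nu) classes.
Proof.
  unfold cls, classes, sector.
  assert (Hu := sqnorm4_unit4_le1 (vsub nu lam)).
  destruct (unit4 (vsub nu lam)) as [[[u1 u2] u3] u4].
  destruct (coords_le1 _ _ _ _ Hu) as [H1 [H2 [H3 H4]]].
  repeat (apply in_prod_iff; split); try (apply up_in_cells; assumption).
  apply in_seq; pose proof (shell_lt4 R (norm4 (vsub nu lam))); lia.
Qed.

Lemma cls_eq_dec (k k' : nat * (Z * Z * Z * Z)) : {k = k'} + {k <> k'}.
Proof. repeat decide equality. Qed.

Lemma min_radius_pos S M c r : (1 <= M)%nat -> is_min_radius S M c r -> 0 < r.
Proof.
  intros HM [[l [Hnd [Hlen Hl]]] _].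
  destruct (Rlt_le_dec 0 r) as [|Hr]; [assumption|exfalso].
  destruct l as [|a [|b l]]; simpl in Hlen; try lia.
  assert (Hc : forall x, In x (a :: b :: l) -> x = c).
  { intros x Hx; apply dist4_le0_eq.
    destruct (Hl x Hx) as [_ Hd]; unfold in_ball in Hd; lra. }
  apply NoDup_cons_iff in Hnd as [Ha _]; apply Ha.
  rewrite (Hc a), (Hc b) by (simpl; tauto); now left.
Qed.

Lemma min_radius_open_ball S M c r L : is_min_radius S M c r -> NoDup L ->
  (forall x, In x L -> In x S /\ dist4 c x < r) -> (length L <= M)%nat.
Proof.
  intros [_ Hmin] HL HLS.
  destruct (le_lt_dec (length L) M) as [|Hlen]; [assumption|exfalso].
  destruct L as [|x0 L0]; [simpl in Hlen; lia|].
  destruct (exists_argmax (dist4 c) x0 L0) as [m [Hm Hmax]].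
  assert (Hball : ball_contains_at_least S c (dist4 c m) (M + 1)).
  { exists (x0 :: L0); split; [assumption|split; [lia|]].
    intros x Hx; split; [apply HLS; assumption|apply Hmax; assumption]. }
  specialize (Hmin _ Hball); specialize (HLS m Hm); lra.
Qed.

Definition in_L (S : list pt4) (Rad : pt4 -> R) (lam x : pt4) : Prop :=
  In x S /\ Rad lam <= Rad x /\ balls_meet lam (Rad lam) x (Rad x).

Lemma class_size_le M S Rad lam k L :
  (1 <= M)%nat ->
  (forall lam, In lam S -> is_min_radius S M lam (Rad lam)) -> In lam S ->
  NoDup L -> (forall x, In x L -> in_L S Rad lam x /\ cls lam (Rad lam) x = k) ->
  (length L <= M)%nat.
Proof.
  intros HM Hrad Hlam HL HLk.
  destruct L as [|x0 L0]; [simpl; lia|].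
  destruct (exists_argmax (fun x => dist4 x lam) x0 L0) as [mu [Hmu Hfar]].
  destruct (HLk mu Hmu) as [[HmuS [HRmu [z [Hz1 Hz2]]]] Hkmu].
  destruct (Rlt_le_dec (dist4 mu lam) (Rad lam)) as [Hnear|Hout].
  - apply (min_radius_open_ball S M lam (Rad lam)); [now apply Hrad|assumption|].
    intros x Hx; split; [apply HLk; assumption|].
    rewrite dist4_sym; specialize (Hfar x Hx); simpl in Hfar; lra.
  - apply (min_radius_open_ball S M mu (Rad mu)); [now apply Hrad|assumption|].
    intros x Hx; destruct (HLk x Hx) as [[HxS _] Hkx]; split; [assumption|].
    apply same_class_close with lam (Rad lam); try assumption.
    + apply (min_radius_pos S M lam); [assumption|now apply Hrad].
    + unfold in_ball in *; rewrite dist4_sym in Hz1.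
      pose proof (dist4_triangle mu z lam); lra.
    + apply Hfar; assumption.
    + congruence.
Qed.

Theorem lemma4p5 :
  exists C : R, 0 < C /\
  forall (M : nat) (S : list pt4) (Rad : pt4 -> R),
    (1 <= M)%nat ->
    NoDup S ->
    (M + 1 <= length S)%nat ->
    (forall lam, In lam S -> is_min_radius S M lam (Rad lam)) ->
    forall lam, In lam S ->
    forall L : list pt4, NoDup L ->
      (forall lam', In lam' L ->
         In lam' S /\ Rad lam <= Rad lam' /\
         balls_meet lam (Rad lam) lam' (Rad lam')) ->
      INR (length L) <= C * INR M.
Proof.
  exists (INR (length classes)); split.
  { apply lt_0_INR; unfold classes, cells.
    rewrite !length_prod, length_map, !length_seq; lia. }
  intros M S Rad HM _ _ Hrad lam Hlam L HL HLp.
  rewrite <- mult_INR; apply le_INR.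
  apply (NoDup_length_le_classes cls_eq_dec (in_L S Rad lam) (cls lam (Rad lam)) M).
  - intros k L' HL' HL'k; apply (class_size_le M S Rad lam k L'); assumption.
  - assumption.
  - intros x Hx; split; [exact (HLp x Hx)|apply cls_in_classes].
Qed.
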